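(* Let $f=\frac1n\sum_{i=1}^n f_i$ where each $f_i:\mathbb{R}^d\to\mathbb{R}$ is $L$-smooth, and assume moreover that either each $f_i$ is $\mu$-strongly convex for some $\mu>0$, or $\inf_x f(x)>-\infty$. Then the iterates of No Full Grad SVRG (described in the context) satisfy, for every epoch $s$, $$\Big\|\nabla f(\omega_s)-\frac1n\sum_{t=0}^{n-1}v_s^t\Big\|^2\le 2\|\nabla f(\omega_s)-v_s\|^2+\frac{2L^2}{n}\sum_{t=0}^{n-1}\|x_s^t-\omega_s\|^2.$$
   Context: No Full Grad SVRG: input $x_0^0\in\mathbb{R}^d$, $\omega_0=x_0^0$, $\tilde v_0^0=0$, $v_0=0$, stepsize $\gamma>0$. For epochs $s=0,1,\dots$: choose a permutation $\pi_s^0,\dots,\pi_s^{n-1}$ of the $n$ component indices (by any shuffling rule); for $t=0,\dots,n-1$ set $\tilde v_s^{t+1}=\frac{t}{t+1}\tilde v_s^t+\frac1{t+1}\nabla f_{\pi_s^t}(x_s^t)$, $v_s^t=\nabla f_{\pi_s^t}(x_s^t)-\nabla f_{\pi_s^t}(\omega_s)+v_s$, $x_s^{t+1}=x_s^t-\gamma v_s^t$; then $x_{s+1}^0=x_s^n$, $\omega_{s+1}=x_s^n$, $\tilde v_{s+1}^0=0$, $v_{s+1}=\tilde v_s^n$. *)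

From HB Require Import structures.
From mathcomp Require Import all_boot all_order all_algebra.
From mathcomp Require Import all_classical all_reals all_analysis.
Set Implicit Arguments. Unset Strict Implicit. Unset Printing Implicit Defensive.
Import Order.TTheory GRing.Theory Num.Theory.
Import numFieldNormedType.Exports.
Local Open Scope ring_scope.

Section NFG.
Variables (R : realType) (d : nat).

Definition dotv (u v : 'rV[R]_d) : R := \sum_(j < d) u ord0 j * v ord0 j.
Definition sqnorm (u : 'rV[R]_d) : R := dotv u u.
Definition enorm (u : 'rV[R]_d) : R := Num.sqrt (sqnorm u).

Definition is_gradient (f : 'rV[R]_d -> R) (gf : 'rV[R]_d -> 'rV[R]_d) : Prop :=
  forall x, differentiable f x /\ forall h, 'd f x h = dotv (gf x) h.

Definition L_smooth (L : R) (f : 'rV[R]_d -> R) (gf : 'rV[R]_d -> 'rV[R]_d) : Prop :=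
  is_gradient f gf /\ forall x y, enorm (gf x - gf y) <= L * enorm (x - y).

Definition strongly_convex (mu : R) (f : 'rV[R]_d -> R) (gf : 'rV[R]_d -> 'rV[R]_d) : Prop :=
  forall x y, f x + dotv (gf x) (y - x) + mu / 2 * sqnorm (y - x) <= f y.

Variables (n : nat) (g : 'I_n -> 'rV[R]_d -> 'rV[R]_d) (gamma : R).

(* Inner loop of epoch s, given x_s^0 = x0, omega_s = w, v_s = v and the
   epoch's ordering ps t = pi_s^t. *)
Fixpoint inner_x (ps : nat -> 'I_n) (x0 w v : 'rV[R]_d) (t : nat) : 'rV[R]_d :=
  match t with
  | 0 => x0
  | t'.+1 => let x := inner_x ps x0 w v t' in
             x - gamma *: (g (ps t') x - g (ps t') w + v)
  end.

Definition inner_v (ps : nat -> 'I_n) (x0 w v : 'rV[R]_d) (t : nat) : 'rV[R]_d :=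
  let x := inner_x ps x0 w v t in g (ps t) x - g (ps t) w + v.

Fixpoint inner_vtil (ps : nat -> 'I_n) (x0 w v : 'rV[R]_d) (t : nat) : 'rV[R]_d :=
  match t with
  | 0 => 0
  | t'.+1 => (t'%:R / t'.+1%:R) *: inner_vtil ps x0 w v t'
             + (t'.+1%:R)^-1 *: g (ps t') (inner_x ps x0 w v t')
  end.

(* Epoch states (x_s^0, omega_s, v_s); pi s t = pi_s^t. *)
Fixpoint epoch (pi : nat -> nat -> 'I_n) (xinit : 'rV[R]_d) (s : nat)
  : 'rV[R]_d * 'rV[R]_d * 'rV[R]_d :=
  match s with
  | 0 => (xinit, xinit, 0)
  | s'.+1 => let: (x0, w, v) := epoch pi xinit s' in
             (inner_x (pi s') x0 w v n, inner_x (pi s') x0 w v n,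
              inner_vtil (pi s') x0 w v n)
  end.

Definition xs pi xinit s t := let: (x0, w, v) := epoch pi xinit s in inner_x (pi s) x0 w v t.
Definition ws pi xinit s := (epoch pi xinit s).1.2.
Definition vs pi xinit s := (epoch pi xinit s).2.
Definition vst pi xinit s t := let: (x0, w, v) := epoch pi xinit s in inner_v (pi s) x0 w v t.

End NFG.

From HB Require Import structures.
From mathcomp Require Import all_boot all_order all_algebra.
From mathcomp Require Import all_classical all_reals all_analysis.
From mathcomp Require Import ring lra.
Set Implicit Arguments. Unset Strict Implicit. Unset Printing Implicit Defensive.
Import Order.TTheory GRing.Theory Num.Theory.
Import numFieldNormedType.Exports.
Local Open Scope ring_scope.

(* Averaging the inner-loop directions v_s^t = g(x_s^t) - g(w_s) + v_s gives
   v_s plus the mean of the corrections g(x_s^t) - g(w_s).  Split the error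
   with |a - b|^2 <= 2|a|^2 + 2|b|^2, bound the squared norm of the mean
   correction by the mean of the squared norms (Jensen), and bound each
   squared correction by L^2 |x_s^t - w_s|^2 (L-smoothness). *)

Lemma sqr_mean_le (R : realFieldType) (n : nat) (c : 'I_n -> R) :
  (0 < n)%N ->
  (n%:R^-1 * \sum_(t < n) c t) ^+ 2 <= n%:R^-1 * \sum_(t < n) c t ^+ 2.
Proof.
move=> n_gt0; set m := n%:R^-1 * _.
have n_pos : 0 < n%:R :> R by rewrite ltr0n.
have sum_c : \sum_(t < n) c t = n%:R * m by rewrite mulVKf ?gt_eqF.
have spread_ge0 : 0 <= \sum_(t < n) (c t - m) ^+ 2.
  by apply: sumr_ge0 => t _; exact: sqr_ge0.
have spreadE : \sum_(t < n) (c t - m) ^+ 2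
             = \sum_(t < n) c t ^+ 2 - 2 * m * \sum_(t < n) c t + n%:R * m ^+ 2.
  rewrite (eq_bigr (fun t => c t ^+ 2 - 2 * m * c t + m ^+ 2)); last by move=> t _; ring.
  by rewrite !big_split /= sumrN -mulr_sumr sumr_const card_ord -mulr_natl; ring.
rewrite spreadE sum_c in spread_ge0.
rewrite -(ler_pM2l n_pos) mulVKf ?gt_eqF //; nra.
Qed.

Section Euclidean.
Variables (R : realType) (d : nat).
Implicit Types (a b : 'rV[R]_d).

Lemma sqnorm_ge0 a : 0 <= sqnorm a.
Proof. by apply: sumr_ge0 => j _; rewrite -expr2 sqr_ge0. Qed.

Lemma sqnorm_sub_le a b : sqnorm (a - b) <= 2 * sqnorm a + 2 * sqnorm b.
Proof.
rewrite /sqnorm /dotv !mulr_sumr -big_split /=; apply: ler_sum => j _.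
rewrite !mxE -subr_ge0; set p := a ord0 j; set q := b ord0 j.
have -> : 2 * (p * p) + 2 * (q * q) - (p - q) * (p - q) = (p + q) ^+ 2 by ring.
exact: sqr_ge0.
Qed.

Lemma sqnorm_mean_le (n : nat) (u : 'I_n -> 'rV[R]_d) : (0 < n)%N ->
  sqnorm (n%:R^-1 *: \sum_(t < n) u t) <= n%:R^-1 * \sum_(t < n) sqnorm (u t).
Proof.
move=> n_gt0; rewrite /sqnorm /dotv exchange_big mulr_sumr /=.
apply: ler_sum => j _; rewrite !mxE summxE -!expr2.
under [X in _ <= _ * X]eq_bigr do rewrite -expr2.
exact: sqr_mean_le.
Qed.

Lemma L_smooth_sqnorm_le (L : R) (f : 'rV[R]_d -> R) (gf : 'rV[R]_d -> 'rV[R]_d) a b :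
  L_smooth L f gf -> sqnorm (gf a - gf b) <= L ^+ 2 * sqnorm (a - b).
Proof.
move=> [_ /(_ a b)]; rewrite /enorm => lip.
have L_sqrt_ge0 : 0 <= L * Num.sqrt (sqnorm (a - b)) by exact: le_trans lip.
rewrite -(sqr_sqrtr (sqnorm_ge0 (gf a - gf b))) -(sqr_sqrtr (sqnorm_ge0 (a - b))).
by rewrite -exprMn ler_sqr ?nnegrE ?sqrtr_ge0.
Qed.

End Euclidean.

Lemma mean_inner_v (R : realType) (d n : nat) (g : 'I_n -> 'rV[R]_d -> 'rV[R]_d)
    (gamma : R) (ps : nat -> 'I_n) (x0 w v : 'rV[R]_d) : (0 < n)%N ->
  n%:R^-1 *: \sum_(t < n) inner_v g gamma ps x0 w v t
  = v + n%:R^-1 *: \sum_(t < n) (g (ps t) (inner_x g gamma ps x0 w v t) - g (ps t) w).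
Proof.
move=> n_gt0; rewrite /inner_v big_split /= sumr_const card_ord scalerDr addrC.
by rewrite -[v *+ n]scaler_nat scalerA mulVf ?scale1r // pnatr_eq0 -lt0n.
Qed.

Theorem lemma1 (R : realType) (d n : nat) (hn : (0 < n)%N)
  (f : 'I_n -> 'rV[R]_d -> R) (g : 'I_n -> 'rV[R]_d -> 'rV[R]_d)
  (F : 'rV[R]_d -> R) (gF : 'rV[R]_d -> 'rV[R]_d) (L gamma : R)
  (xinit : 'rV[R]_d) (pi : nat -> nat -> 'I_n) :
  (forall x, F x = n%:R^-1 * \sum_(i < n) f i x) ->
  is_gradient F gF ->
  (forall i, L_smooth L (f i) (g i)) ->
  ((exists mu : R, 0 < mu /\ forall i, strongly_convex mu (f i) (g i)) \/
   (exists m : R, forall x, m <= F x)) ->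
  0 < gamma ->
  (forall s, perm_eq [seq pi s t | t <- iota 0 n] (enum 'I_n)) ->
  forall s : nat,
    let w := ws g gamma pi xinit s in
    sqnorm (gF w - n%:R^-1 *: \sum_(t < n) vst g gamma pi xinit s t)
    <= 2 * sqnorm (gF w - vs g gamma pi xinit s)
       + 2 * L ^+ 2 / n%:R * \sum_(t < n) sqnorm (xs g gamma pi xinit s t - w).
Proof.
move=> _ _ smooth _ _ _ s /=; rewrite /ws /vs /vst /xs.
case: (epoch g gamma pi xinit s) => [[x0 w] v] /=.
rewrite mean_inner_v // opprD addrA.
apply: (le_trans (sqnorm_sub_le _ _)); rewrite lerD2l -2!mulrA ler_wpM2l //.
apply: (le_trans (sqnorm_mean_le _ hn)).
rewrite mulrCA ler_wpM2l ?invr_ge0 ?ler0n // mulr_sumr.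
by apply: ler_sum => t _; exact: L_smooth_sqnorm_le.
Qed.
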